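(* Consider a single round of the following quantum protocol, with honest Bob and an arbitrary strategy of Alice. 1. Alice prepares an arbitrary (possibly mixed) state $\rho_{AB}$ and sends subsystem $B$ to Bob through a noiseless channel. 2. Bob chooses a uniformly random bit $b$, independent of everything else, and announces it. 3. Alice performs a two-outcome POVM on subsystem $A$ (which may depend on $b$) and announces a bit $a$ determined by its outcome. 4. Bob measures his system with the projective measurement $\{|\psi_a\rangle\langle\psi_a|,\ I-|\psi_a\rangle\langle\psi_a|\}$, setting $f=1$ for the first outcome and $f=0$ otherwise. Bob's output bit is $y=a\oplus b$. Let $E(f)=\mathrm P(f=1)$. Then for every $c\in\{0,1\}$, \[ \mathrm P(y=c)\ \le\ \mathcal F(E(f)), \qquad\text{where}\qquad \mathcal F(u)=\min\Big\{\tfrac12+\frac{\sqrt{1-u}}{\sqrt2\,\sin^2\theta}+\frac{1-u}{\sin^2\theta},\ 1\Big\}. \] Moreover, $\mathcal F$ is concave and monotonically non-increasing on $[0,1]$.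
   Context: Fix $\theta\in(0,\pi/2]$. Let $|\psi_0\rangle,|\psi_1\rangle$ be two pure states with $|\langle\psi_0|\psi_1\rangle|^2=\cos^2\theta$. *)

From HB Require Import structures.
From mathcomp Require Import all_boot all_order all_algebra.
From mathcomp Require Import all_classical all_reals all_analysis.
From mathcomp Require Import complex mxtens.
Set Implicit Arguments. Unset Strict Implicit. Unset Printing Implicit Defensive.
Import Order.TTheory GRing.Theory Num.Theory.
Local Open Scope ring_scope.

Section QDefs.
Variable R : realType.
Local Notation C := R[i].

Definition adj {m n} (A : 'M[C]_(m, n)) : 'M[C]_(n, m) := (map_mx Num.conj A)^T.

Definition hermitian {n} (A : 'M[C]_n) : Prop := adj A = A.

Definition psd {n} (A : 'M[C]_n) : Prop :=
  hermitian A /\ forall v : 'cV[C]_n, 0 <= (adj v *m A *m v) 0 0.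

Definition density {n} (rho : 'M[C]_n) : Prop := psd rho /\ \tr rho = 1.

Definition unit_vec {n} (psi : 'cV[C]_n) : Prop := (adj psi *m psi) 0 0 = 1.

Definition inner {n} (phi psi : 'cV[C]_n) : C := (adj phi *m psi) 0 0.

Definition proj {n} (psi : 'cV[C]_n) : 'M[C]_n := psi *m adj psi.

Definition povm2 {n} (M : bool -> 'M[C]_n) : Prop :=
  psd (M false) /\ psd (M true) /\ M false + M true = 1%:M.

(* Alice's strategy: for each announced b, a two-outcome POVM whose outcome is a *)
(* probability (real part of the trace) of the event "Alice's outcome is a, and Bob's
   projector N clicks", on joint state rho over A (x) B *)
Definition prob_joint {dA dB} (rho : 'M[C]_(dA * dB)) (M : 'M[C]_dA) (N : 'M[C]_dB) : R :=
  complex.Re (\tr (rho *m tensmx M N)).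

(* E(f) = P(f = 1): b uniform, a from Alice's POVM P b, Bob projects on psi a *)
Definition Ef {dA dB} (rho : 'M[C]_(dA * dB)) (P : bool -> bool -> 'M[C]_dA)
  (psi : bool -> 'cV[C]_dB) : R :=
  \sum_(b : bool) \sum_(a : bool) 2^-1 * prob_joint rho (P b a) (proj (psi a)).

Definition Py {dA dB} (rho : 'M[C]_(dA * dB)) (P : bool -> bool -> 'M[C]_dA)
  (c : bool) : R :=
  \sum_(b : bool) \sum_(a : bool | addb a b == c) 2^-1 * prob_joint rho (P b a) 1%:M.

Definition Fbound (theta u : R) : R :=
  Num.min (2^-1 + Num.sqrt (1 - u) / (Num.sqrt 2 * sin theta ^+ 2)
           + (1 - u) / sin theta ^+ 2) 1.

End QDefs.

(* Write [psi true = a psi false + w] with [w] orthogonal to [psi false] and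
   [|w|^2 = sin^2 theta].  For each of Alice's outcomes the map
   [N |-> tr (rho (P b a (x) N))] is a positive functional on Bob's operators;
   its positivity on [Y^* Y] for [Y = lam |x><x| + t x w^*] controls the cross
   terms, so on the outcome [(b, a)] Bob's statistic [<x|.|x> - <y|.|y>]
   (with [x = psi a], [y = psi (~~ a)]) is [sin^2 theta] times the outcome
   probability [p b a], up to an error linear in the miss probability
   [P(f = 0, a | b)] and in [lam].  As Bob's reduced state
   does not depend on [b], comparing [b = 0] and [b = 1] bounds Alice's bias
   [|p 0 0 - p 1 0|]; optimizing over [lam] gives the square-root term of [F]. *)

From Pilot Require Import Defs.
From HB Require Import structures.
From mathcomp Require Import all_boot all_order all_algebra.
From mathcomp Require Import all_classical all_reals all_analysis.
From mathcomp Require Import complex mxtens sesquilinear spectral.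
From mathcomp Require Import ring lra.
Import Order.TTheory GRing.Theory Num.Theory.
Local Open Scope ring_scope.
Local Open Scope complex_scope.
Set Implicit Arguments. Unset Strict Implicit. Unset Printing Implicit Defensive.

(* The bare name [proj] is taken by mathcomp-classical. *)
Local Notation proj := Defs.proj.

Section Tensor.
Variable K : comPzRingType.

Lemma tensmxDl m n p q (A1 A2 : 'M[K]_(m, n)) (B : 'M[K]_(p, q)) :
  (A1 + A2) *t B = A1 *t B + A2 *t B.
Proof. by apply/matrixP=> i j; rewrite !mxE mulrDl. Qed.

Lemma tensmxDr m n p q (A : 'M[K]_(m, n)) (B1 B2 : 'M[K]_(p, q)) :
  A *t (B1 + B2) = A *t B1 + A *t B2.
Proof. by apply/matrixP=> i j; rewrite !mxE mulrDr. Qed.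

Lemma tensmxZr m n p q (A : 'M[K]_(m, n)) (a : K) (B : 'M[K]_(p, q)) :
  A *t (a *: B) = a *: (A *t B).
Proof. by apply/matrixP=> i j; rewrite !mxE mulrCA. Qed.

Lemma tensmx11 m n : (1%:M : 'M[K]_m) *t (1%:M : 'M[K]_n) = 1%:M.
Proof.
apply/matrixP=> i j.
case: (mxtens_indexP i) => i0 i1; case: (mxtens_indexP j) => j0 j1.
rewrite tensmxE !mxE (can_eq (@mxtens_indexK _ _)) xpair_eqE.
by case: (i0 == j0); case: (i1 == j1); rewrite ?mulr1 ?mulr0 ?mul0r.
Qed.

End Tensor.

Section Adjoint.
Variable R : realType.
Local Notation C := R[i].

Lemma adjK m n (A : 'M[C]_(m, n)) : adj (adj A) = A.
Proof. by rewrite /adj map_trmx trmxK map_mxCK. Qed.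

Lemma adjM m n p (A : 'M[C]_(m, n)) (B : 'M[C]_(n, p)) :
  adj (A *m B) = adj B *m adj A.
Proof. by rewrite /adj map_mxM trmx_mul. Qed.

Lemma adjD m n (A B : 'M[C]_(m, n)) : adj (A + B) = adj A + adj B.
Proof. by rewrite /adj map_mxD linearD. Qed.

Lemma adjB m n (A B : 'M[C]_(m, n)) : adj (A - B) = adj A - adj B.
Proof. by rewrite /adj map_mxB linearB. Qed.

Lemma adjZ m n (a : C) (A : 'M[C]_(m, n)) : adj (a *: A) = Num.conj a *: adj A.
Proof. by rewrite /adj map_mxZ linearZ. Qed.

Lemma adj1 n : adj (1%:M : 'M[C]_n) = 1%:M.
Proof. by rewrite /adj map_mx1 trmx1. Qed.

Lemma adj_tens m n p q (A : 'M[C]_(m, n)) (B : 'M[C]_(p, q)) :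
  adj (A *t B) = adj A *t adj B.
Proof. by rewrite /adj map_mxT trmx_tens. Qed.

Lemma innerC n (u v : 'cV[C]_n) : inner v u = Num.conj (inner u v).
Proof. by rewrite /inner -[adj v *m u]adjK adjM adjK !mxE. Qed.

Lemma outer_mul n (u v z t : 'cV[C]_n) :
  (u *m adj v) *m (z *m adj t) = inner v z *: (u *m adj t).
Proof.
by rewrite mulmxA -(mulmxA u) [adj v *m z]mx11_scalar mul_mx_scalar -scalemxAl.
Qed.

Lemma adj_proj n (x : 'cV[C]_n) : adj (proj x) = proj x.
Proof. by rewrite /proj adjM adjK. Qed.

Lemma proj_idem n (x : 'cV[C]_n) : unit_vec x -> proj x *m proj x = proj x.
Proof. by move=> hx; rewrite /proj outer_mul [inner x x]hx scale1r. Qed.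

Lemma compl_proj_sqr n (x : 'cV[C]_n) : unit_vec x ->
  adj (1%:M - proj x) *m (1%:M - proj x) = 1%:M - proj x.
Proof.
move=> hx; rewrite adjB adj1 adj_proj mulmxBl mul1mx mulmxBr mulmx1.
by rewrite proj_idem // subrr subr0.
Qed.

Lemma proj_overlap_decomp n (x y : 'cV[C]_n) (c2 : R) :
  unit_vec x -> unit_vec y -> inner x y * Num.conj (inner x y) = c2%:C ->
  let a := inner x y in let w := y - a *: x in
  [/\ inner x w = 0, inner w w = (1 - c2)%:C &
      proj y = c2%:C *: proj x + a *: (x *m adj w) + Num.conj a *: (w *m adj x)
               + proj w].
Proof.
move=> hx hy hc a w.
have im u v : adj u *m v = (inner u v)%:M by rewrite [LHS]mx11_scalar.
have xw : inner x w = 0.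
  by rewrite /inner mulmxBr -scalemxAr !im [inner x x]hx !mxE eqxx mulr1 subrr.
have wx : inner w x = 0 by rewrite innerC xw rmorph0.
split => //.
  rewrite /inner {2}/w mulmxBr -scalemxAr !im wx !mxE eqxx mulr0 subr0.
  rewrite /inner /w adjB adjZ mulmxBl -scalemxAl !im [inner y y]hy !mxE eqxx.
  by rewrite -/a mulrC hc rmorphB.
have -> : y = w + a *: x by rewrite /w subrK.
rewrite /proj adjD adjZ mulmxDl !mulmxDr -!scalemxAl -!scalemxAr scalerA.
by rewrite -hc mulrC [LHS](AC (2*2) ((4*3)*2*1)).
Qed.

Lemma psd_factor n (P : 'M[C]_n) : psd P -> exists Z : 'M[C]_n, P = adj Z *m Z.
Proof.
move=> [hP hq].
have adj_tc m k (M : 'M[C]_(m, k)) : (M ^t Num.conj)%sesqui = adj M.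
  by rewrite /adj map_trmx.
set U := spectralmx P; set d := spectral_diag P.
have Nn : P \is normalmx by apply/normalmxP; rewrite !adj_tc hP.
have eP := orthomx_spectralP Nn; rewrite -/U -/d in eP.
have Uu : U \is unitarymx by apply: spectral_unitarymx.
rewrite invmx_unitary // adj_tc in eP.
have UU : U *m adj U = 1%:M by rewrite -adj_tc; apply/unitarymxP.
have adj_delta i : adj (delta_mx i 0 : 'cV[C]_n) = delta_mx 0 i.
  by apply/matrixP=> s t; rewrite !mxE rmorph_nat ord1 eqxx andbT eq_sym.
have d_ge0 i : 0 <= d 0 i.
  have := hq (adj U *m delta_mx i 0).
  rewrite adjM adjK adj_delta eP !mulmxA.
  rewrite -[delta_mx 0 i *m U *m adj U]mulmxA UU mulmx1.
  rewrite -(mulmxA _ U (adj U)) UU mulmx1.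
  by rewrite -colE -rowE !mxE eqxx mulr1n.
exists (diag_mx (map_mx sqrtC d) *m U).
rewrite {1}eP adjM !mulmxA -(mulmxA (adj U)); congr (_ *m _ *m _).
apply/matrixP=> i j; rewrite mul_mx_diag !mxE.
have [->|nij] := eqVneq i j; last by rewrite !mulr0n rmorph0 mul0r.
by rewrite !mulr1n geC0_conj ?sqrtC_ge0 // -expr2 sqrtCK.
Qed.

Lemma psd_trace_ge0 n (rho : 'M[C]_n) k (W : 'M[C]_(k, n)) :
  psd rho -> 0 <= \tr (W *m rho *m adj W).
Proof.
case=> _ hq; apply: sumr_ge0 => i _.
have := hq (adj (row i W)); rewrite adjK.
suff -> : (row i W *m rho *m adj (row i W)) 0 0 = (W *m rho *m adj W) i i by [].
rewrite !mxE; apply: eq_bigr => j _; rewrite !mxE; congr (_ * _).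
by apply: eq_bigr => l _; rewrite !mxE.
Qed.

End Adjoint.

Section RealPart.
Variable R : realType.
Local Notation C := R[i].

Lemma ReD (z w : C) : complex.Re (z + w) = complex.Re z + complex.Re w.
Proof. by case: z; case: w. Qed.

Lemma ReN (z : C) : complex.Re (- z) = - complex.Re z.
Proof. by case: z. Qed.

Lemma ReB (z w : C) : complex.Re (z - w) = complex.Re z - complex.Re w.
Proof. by rewrite ReD ReN. Qed.

Lemma Re_realM (r : R) (z : C) : complex.Re (r%:C * z) = r * complex.Re z.
Proof. by case: z => a b; simpc. Qed.

Lemma conjC_real (r : R) : Num.conj r%:C = r%:C :> C.
Proof. exact: conjc_real. Qed.

Lemma Re_ge0 (z : C) : 0 <= z -> 0 <= complex.Re z.
Proof. by rewrite lecE => /andP[]. Qed.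

End RealPart.

Section PositiveFunctional.
Variables (R : realType) (n : nat) (g : 'M[R[i]]_n -> R[i]).
Hypothesis gD : forall A B, g (A + B) = g A + g B.
Hypothesis gZ : forall a A, g (a *: A) = a * g A.
Hypothesis g_ge0 : forall k (Y : 'M[R[i]]_(k, n)), 0 <= g (adj Y *m Y).
Local Notation Reg A := (complex.Re (g A)).

Lemma gB A B : g (A - B) = g A - g B.
Proof. by rewrite gD -scaleN1r gZ mulN1r. Qed.

Lemma Reg_proj_ge0 (w : 'cV[R[i]]_n) : 0 <= Reg (proj w).
Proof. by apply: Re_ge0; rewrite /proj -{1}(adjK w); apply: g_ge0. Qed.

Lemma Reg_compl_proj_ge0 (x : 'cV[R[i]]_n) : unit_vec x -> 0 <= Reg (1%:M - proj x).
Proof. by move=> hx; apply: Re_ge0; rewrite -compl_proj_sqr. Qed.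

(* [proj w <= s2 (1 - proj x)] as operators: [M^* M = s2 M] for
   [M = s2 (1 - proj x) - proj w]. *)
Lemma Reg_proj_orth_le (x w : 'cV[R[i]]_n) (s2 : R) :
  unit_vec x -> inner x w = 0 -> inner w w = s2%:C -> 0 < s2 ->
  Reg (proj w) <= s2 * Reg (1%:M - proj x).
Proof.
move=> hx xw ww s2_gt0.
have wx : inner w x = 0 by rewrite innerC xw rmorph0.
set Q := 1%:M - proj x; set W := proj w.
have adjQ : adj Q = Q by rewrite adjB adj1 adj_proj.
have QQ : Q *m Q = Q by rewrite -{1}adjQ compl_proj_sqr.
have QW : Q *m W = W by rewrite mulmxBl mul1mx /W /proj outer_mul xw scale0r subr0.
have WQ : W *m Q = W by rewrite mulmxBr mulmx1 /W /proj outer_mul wx scale0r subr0.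
have WW : W *m W = s2%:C *: W by rewrite /W /proj outer_mul ww.
have adjW : adj W = W by exact: adj_proj.
clearbody Q W.
pose M := s2%:C *: Q - W.
have MM : adj M *m M = s2%:C *: M.
  rewrite /M adjB adjZ conjC_real adjQ adjW.
  rewrite mulmxBl !mulmxBr -!scalemxAl -!scalemxAr QQ QW WQ WW scalerBr.
  by rewrite subrr subr0.
have := g_ge0 M; rewrite MM gZ pmulr_rge0 ?ltcR // /M gB gZ => /Re_ge0.
by rewrite ReB Re_realM subr_ge0.
Qed.

(* Positivity of [g] on [Y^* Y] with [Y = lam proj x +- b x w^*]. *)
Lemma Reg_cross_le (x w : 'cV[R[i]]_n) (b : R[i]) (c lam : R) :
  unit_vec x -> Num.conj b * b = c%:C -> 0 < lam ->
  `|complex.Re (b * g (x *m adj w) + Num.conj b * g (w *m adj x))|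
    <= lam * Reg (proj x) + c * Reg (proj w) / lam.
Proof.
move=> hx hb lam_gt0.
set u := g (x *m adj w); set v := g (w *m adj x).
have pos s : Num.conj s * s = c%:C ->
    0 <= lam * lam * Reg (proj x) + lam * complex.Re (s * u + Num.conj s * v)
         + c * Reg (proj w).
  move=> hs; move/Re_ge0: (g_ge0 (lam%:C *: proj x + s *: (x *m adj w))).
  rewrite adjD !adjZ conjC_real adj_proj adjM adjK mulmxDl !mulmxDr.
  rewrite -!scalemxAl -!scalemxAr proj_idem // /proj !outer_mul [inner x x]hx.
  rewrite !scale1r !scalerA.
  have gL k1 k2 k3 k4 (A1 A2 A3 A4 : 'M[R[i]]_n) :
      g (k1 *: A1 + k2 *: A2 + (k3 *: A3 + k4 *: A4))
      = k1 * g A1 + k2 * g A2 + (k3 * g A3 + k4 * g A4).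
    by rewrite !gD !gZ.
  rewrite gL -/u -/v.
  suff -> : (lam%:C * lam%:C) * g (x *m adj x) + (lam%:C * s) * u
      + ((Num.conj s * lam%:C) * v + (Num.conj s * s) * g (w *m adj w))
      = (lam * lam)%:C * g (x *m adj x) + lam%:C * (s * u + Num.conj s * v)
      + c%:C * g (w *m adj w).
    by rewrite 2!ReD !Re_realM.
  by rewrite -hs rmorphM /=; ring.
have h1 := pos b hb.
have h2 := pos (- b); rewrite rmorphN mulrNN !mulNr -opprD ReN in h2.
have {}h2 := h2 hb.
have -> : lam * Reg (proj x) + c * Reg (proj w) / lam
    = (lam * lam * Reg (proj x) + c * Reg (proj w)) / lam.
  by field; rewrite gt_eqF.
rewrite ler_pdivlMr // -(gtr0_norm lam_gt0) -normrM (gtr0_norm lam_gt0).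
by rewrite ler_norml; apply/andP; split; lra.
Qed.

Lemma Reg_overlap_bound (x y : 'cV[R[i]]_n) (c2 lam : R) :
  unit_vec x -> unit_vec y -> inner x y * Num.conj (inner x y) = c2%:C ->
  0 < 1 - c2 -> 0 < lam ->
  `|Reg (proj x - proj y) - (1 - c2) * Reg 1%:M|
    <= 2 * (1 - c2) * Reg (1%:M - proj x) + lam * Reg 1%:M
       + c2 * (1 - c2) * Reg (1%:M - proj x) / lam.
Proof.
move=> hx hy hc s2_gt0 lam_gt0.
have [xw ww ->] := proj_overlap_decomp hx hy hc.
set a := inner x y in hc *; set w := y - a *: x in xw ww *.
have c2_ge0 : 0 <= c2 by rewrite -ler0c -hc mul_conjC_ge0.
have hT := Reg_cross_le w hx (etrans (mulrC _ _) hc) lam_gt0.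
have hW0 := Reg_proj_ge0 w.
have hW1 := Reg_proj_orth_le hx xw ww s2_gt0.
have he := Reg_compl_proj_ge0 hx.
set e := Reg (1%:M - proj x) in hW1 he *.
have g1 : Reg 1%:M = e + Reg (proj x) by rewrite /e gB ReB subrK.
set X := Reg (proj x) in hT g1; set W := Reg (proj w) in hT hW0 hW1.
rewrite gB !gD !gZ ReB !ReD Re_realM -/X -/W g1.
rewrite ReD in hT.
have hX : lam * X <= lam * (e + X) by rewrite ler_pM2l // lerDr.
have hW : c2 * W / lam <= c2 * (1 - c2) * e / lam.
  by rewrite ler_pM2r ?invr_gt0 // -mulrA ler_wpM2l.
move: hT; rewrite !ler_norml => /andP[hT1 hT2].
by apply/andP; split; lra.
Qed.

End PositiveFunctional.

Section RealBounds.
Variable R : realType.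

Lemma sqrt_concave (a b t : R) : 0 <= a -> 0 <= b -> 0 <= t <= 1 ->
  t * Num.sqrt a + (1 - t) * Num.sqrt b <= Num.sqrt (t * a + (1 - t) * b).
Proof.
move=> a_ge0 b_ge0 /andP[t_ge0 t_le1].
have := sqrtr_ge0 a; have := sqrtr_ge0 b.
have ea := sqr_sqrtr a_ge0; have eb := sqr_sqrtr b_ge0.
set sa := Num.sqrt a in ea *; set sb := Num.sqrt b in eb * => sb_ge0 sa_ge0.
have lhs_ge0 : 0 <= t * sa + (1 - t) * sb by apply: addr_ge0; apply: mulr_ge0; lra.
rewrite -(ger0_norm lhs_ge0) -sqrtr_sqr; apply: ler_wsqrtr.
have : 0 <= t * (1 - t) * (sa - sb) ^+ 2.
  by apply: mulr_ge0; [apply: mulr_ge0; lra | exact: sqr_ge0].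
by rewrite -ea -eb; nra.
Qed.

Lemma concave_min1 (a b t : R) : 0 <= t <= 1 ->
  t * Num.min a 1 + (1 - t) * Num.min b 1 <= Num.min (t * a + (1 - t) * b) 1.
Proof.
move=> /andP[t_ge0 t_le1].
have [ma1 ma2] : Num.min a 1 <= a /\ Num.min a 1 <= 1 by rewrite !ge_min !lexx orbT.
have [mb1 mb2] : Num.min b 1 <= b /\ Num.min b 1 <= 1 by rewrite !ge_min !lexx orbT.
rewrite le_min; apply/andP; split; nra.
Qed.

(* [min_(lam > 0) lam + m / lam = 2 sqrt m]; testing with [lam = sqrt m + e]
   avoids a case split on [m = 0]. *)
Lemma le_two_sqrt_of_forall_gt0 (m z : R) : 0 <= m ->
  (forall lam, 0 < lam -> z <= lam + m / lam) -> z <= 2 * Num.sqrt m.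
Proof.
move=> m_ge0 hz; apply/ler_addgt0Pr => e e_gt0.
have r_ge0 := sqrtr_ge0 m.
have lam_gt0 : 0 < Num.sqrt m + e by lra.
apply: (le_trans (hz _ lam_gt0)).
have : m / (Num.sqrt m + e) <= Num.sqrt m.
  by rewrite ler_pdivrMr // mulrDr -expr2 sqr_sqrtr // lerDl mulr_ge0 // ltW.
lra.
Qed.

Lemma sin_sqr_gt0 (theta : R) : 0 < theta <= pi / 2 -> 0 < sin theta ^+ 2.
Proof.
move=> /andP[theta_gt0 theta_le]; rewrite exprn_gt0 // sin_gt0_pi // theta_gt0 /=.
by apply: le_lt_trans theta_le _; have := pi_gt0 R; lra.
Qed.

Variable theta : R.
Hypothesis sin2_gt0 : 0 < sin theta ^+ 2.

Lemma Fbound_concave (u v t : R) : u <= 1 -> v <= 1 -> 0 <= t <= 1 ->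
  t * Fbound theta u + (1 - t) * Fbound theta v
    <= Fbound theta (t * u + (1 - t) * v).
Proof.
move=> u_le1 v_le1 t01; apply: le_trans (concave_min1 _ _ t01) _.
rewrite /Fbound; apply: le_min2 => //.
have K_gt0 : 0 < Num.sqrt 2 * sin theta ^+ 2 by rewrite mulr_gt0 // sqrtr_gt0.
have -> : 1 - (t * u + (1 - t) * v) = t * (1 - u) + (1 - t) * (1 - v) by ring.
have hsq := @sqrt_concave (1 - u) (1 - v) t.
have : t * Num.sqrt (1 - u) / (Num.sqrt 2 * sin theta ^+ 2)
       + (1 - t) * Num.sqrt (1 - v) / (Num.sqrt 2 * sin theta ^+ 2)
    <= Num.sqrt (t * (1 - u) + (1 - t) * (1 - v)) / (Num.sqrt 2 * sin theta ^+ 2).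
  by rewrite -mulrDl ler_pM2r ?invr_gt0 //; apply: hsq => //; lra.
set K := Num.sqrt 2 * _; set L := sin theta ^+ 2.
have -> : (t * (1 - u) + (1 - t) * (1 - v)) / L
    = t * ((1 - u) / L) + (1 - t) * ((1 - v) / L) by ring.
rewrite !mulrA; lra.
Qed.

Lemma Fbound_nonincr (u v : R) : u <= v -> Fbound theta v <= Fbound theta u.
Proof.
move=> uv; rewrite /Fbound; apply: le_min2 => //.
have K_gt0 : 0 < Num.sqrt 2 * sin theta ^+ 2 by rewrite mulr_gt0 // sqrtr_gt0.
apply: lerD; first apply: lerD => //.
  by rewrite ler_pM2r ?invr_gt0 //; apply: ler_wsqrtr; lra.
by rewrite ler_pM2r ?invr_gt0 //; lra.
Qed.

End RealBounds.

Section BiasBound.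
Variable R : realType.

(* [2 s2 (p ff - p tf)] is a signed sum of the four [D b a - s2 p b a] thanks
   to the hypothesis on [D]; optimizing over [lam] yields the square root. *)
Lemma bias_bound (c2 delta : R) (p e D : bool -> bool -> R) :
  0 <= c2 -> 0 < 1 - c2 ->
  (forall b, p b false + p b true = 1) -> (forall b a, 0 <= e b a) ->
  D false false - D false true = D true false - D true true ->
  (forall b a lam, 0 < lam ->
     `|D b a - (1 - c2) * p b a|
       <= 2 * (1 - c2) * e b a + lam * p b a + c2 * (1 - c2) * e b a / lam) ->
  e false false + e false true + e true false + e true true = 2 * delta ->
  (1 - c2) * `|p false false - p true false| <= 2 * (1 - c2) * delta + Num.sqrt delta.
Proof.
move=> c2_ge0 s2_gt0 p_sum e_ge0 hD hb hdelta.
have delta_ge0 : 0 <= delta.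
  by rewrite -(pmulr_rge0 _ (ltr0Sn _ 1)) -hdelta !addr_ge0.
have m_ge0 : 0 <= c2 * (1 - c2) * delta by rewrite !mulr_ge0 //; lra.
suff : (1 - c2) * `|p false false - p true false| - 2 * (1 - c2) * delta
         <= 2 * Num.sqrt (c2 * (1 - c2) * delta).
  have : 2 * Num.sqrt (c2 * (1 - c2) * delta) <= Num.sqrt delta.
    rewrite -[2 * _]ger0_norm ?mulr_ge0 ?sqrtr_ge0 // -sqrtr_sqr ler_wsqrtr //.
    by rewrite exprMn sqr_sqrtr //; have := sqr_ge0 (1 - 2 * c2); nra.
  lra.
apply: le_two_sqrt_of_forall_gt0 => // lam lam_gt0.
have sum_lam k b : k * p b false + k * p b true = k by rewrite -mulrDr p_sum mulr1.
have sum_e : c2 * (1 - c2) * e false false / lam + c2 * (1 - c2) * e false true / lam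
    + c2 * (1 - c2) * e true false / lam + c2 * (1 - c2) * e true true / lam
    = 2 * (c2 * (1 - c2) * delta / lam).
  have -> : delta = (e false false + e false true + e true false + e true true) / 2.
    by rewrite hdelta mulrC mulKf.
  by field; rewrite gt_eqF.
have := hb false false lam lam_gt0; have := hb false true lam lam_gt0.
have := hb true false lam lam_gt0; have := hb true true lam lam_gt0.
rewrite !ler_norml => /andP[h11 h11'] /andP[h10 h10'] /andP[h01 h01'] /andP[h00 h00'].
rewrite -{1}(ger0_norm (ltW s2_gt0)) -normrM lerBlDr ler_norml.
have := sum_lam lam false; have := sum_lam lam true.
have := sum_lam (1 - c2) false; have := sum_lam (1 - c2) true.
have : (1 - c2) * (e false false + e false true + e true false + e true true)
       = 2 * ((1 - c2) * delta) by rewrite hdelta mulrCA.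
by move=> *; apply/andP; split; lra.
Qed.

Lemma half_bias_le (s2 delta x : R) : 0 < s2 <= 1 -> 0 <= delta ->
  s2 * x <= 2 * s2 * delta + Num.sqrt delta ->
  x / 2 <= Num.sqrt delta / (Num.sqrt 2 * s2) + delta / s2.
Proof.
move=> /andP[s2_gt0 s2_le1] delta_ge0 hx.
have q_gt0 : 0 < Num.sqrt 2 :> R by rewrite sqrtr_gt0.
have q_le2 : Num.sqrt 2 <= 2 :> R.
  by have := sqr_sqrtr (ler0n R 2); have := sqrtr_ge0 (2 : R); nra.
have r_ge0 := sqrtr_ge0 delta.
set q := Num.sqrt 2 in q_gt0 q_le2 *; set r := Num.sqrt delta in hx r_ge0 *.
have -> : r / (q * s2) + delta / s2 = (r + q * delta) / (q * s2).
  by field; rewrite ?(gt_eqF q_gt0) ?(gt_eqF s2_gt0).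
rewrite ler_pdivlMr ?mulr_gt0 //.
have : q * s2 * delta <= q * delta by rewrite -mulrA ler_pM2l // ler_piMl.
have := ler_wpM2r r_ge0 q_le2.
nra.
Qed.

End BiasBound.

Section Bipartite.
Variables (R : realType) (dA dB : nat) (rho : 'M[R[i]]_(dA * dB)).

Lemma tr_tensD (M : 'M[R[i]]_dA) (N1 N2 : 'M[R[i]]_dB) :
  \tr (rho *m (M *t (N1 + N2))) = \tr (rho *m (M *t N1)) + \tr (rho *m (M *t N2)).
Proof. by rewrite tensmxDr mulmxDr mxtraceD. Qed.

Lemma tr_tensZ (M : 'M[R[i]]_dA) a (N : 'M[R[i]]_dB) :
  \tr (rho *m (M *t (a *: N))) = a * \tr (rho *m (M *t N)).
Proof. by rewrite tensmxZr -scalemxAr mxtraceZ. Qed.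

Lemma tr_tens_ge0 (M : 'M[R[i]]_dA) k (Y : 'M[R[i]]_(k, dB)) :
  psd rho -> psd M -> 0 <= \tr (rho *m (M *t (adj Y *m Y))).
Proof.
move=> hrho /psd_factor[Z ->].
rewrite -tensmx_mul -!adj_tens mulmxA mxtrace_mulC mulmxA.
exact: psd_trace_ge0 hrho.
Qed.

Lemma prob_jointDl (M1 M2 : 'M[R[i]]_dA) (N : 'M[R[i]]_dB) :
  prob_joint rho (M1 + M2) N = prob_joint rho M1 N + prob_joint rho M2 N.
Proof. by rewrite /prob_joint tensmxDl mulmxDr mxtraceD ReD. Qed.

Lemma prob_jointB (M : 'M[R[i]]_dA) (N1 N2 : 'M[R[i]]_dB) :
  prob_joint rho M (N1 - N2) = prob_joint rho M N1 - prob_joint rho M N2.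
Proof. by rewrite /prob_joint (gB (tr_tensD M) (tr_tensZ M)) ReB. Qed.

Lemma prob_jointN (M : 'M[R[i]]_dA) (N : 'M[R[i]]_dB) :
  prob_joint rho M (- N) = - prob_joint rho M N.
Proof. by rewrite /prob_joint -scaleN1r tr_tensZ mulN1r ReN. Qed.

Lemma prob_joint_ge0 (M : 'M[R[i]]_dA) k (Y : 'M[R[i]]_(k, dB)) :
  psd rho -> psd M -> 0 <= prob_joint rho M (adj Y *m Y).
Proof. by move=> hrho hM; apply/Re_ge0/tr_tens_ge0. Qed.

Lemma prob_joint_density : density rho -> prob_joint rho 1%:M 1%:M = 1.
Proof. by case=> _ htr; rewrite /prob_joint tensmx11 mulmx1 htr. Qed.

End Bipartite.

Section Protocol.
Variables (R : realType) (dA dB : nat) (rho : 'M[R[i]]_(dA * dB)).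
Variables (P : bool -> bool -> 'M[R[i]]_dA) (psi : bool -> 'cV[R[i]]_dB) (c2 : R).
Hypothesis hrho : density rho.
Hypothesis hP : forall b, povm2 (P b).
Hypothesis hpsi : forall a, unit_vec (psi a).
Hypothesis hc2 : `|inner (psi false) (psi true)| ^+ 2 = c2%:C.

Local Notation p b a := (prob_joint rho (P b a) 1%:M).
Local Notation e b a := (prob_joint rho (P b a) (1%:M - proj (psi a))).
Local Notation D b a := (prob_joint rho (P b a) (proj (psi a) - proj (psi (~~ a)))).

Lemma povm_psd b a : psd (P b a).
Proof. by case: (hP b) => [? [? _]]; case: a. Qed.

Lemma povm_prob_sum b N :
  prob_joint rho (P b false) N + prob_joint rho (P b true) N = prob_joint rho 1%:M N.
Proof. by case: (hP b) => _ [_ <-]; rewrite prob_jointDl. Qed.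

Lemma outcome_prob_sum b : p b false + p b true = 1.
Proof. by rewrite povm_prob_sum prob_joint_density. Qed.

Lemma outcome_prob_ge0 b a : 0 <= p b a.
Proof.
rewrite -[1%:M](mul1mx 1%:M) -{1}adj1.
by apply: prob_joint_ge0 (povm_psd b a); case: hrho.
Qed.

Lemma miss_prob_ge0 b a : 0 <= e b a.
Proof.
rewrite -compl_proj_sqr //.
by apply: prob_joint_ge0 (povm_psd b a); case: hrho.
Qed.

Lemma test_stat_marginal : D false false - D false true = D true false - D true true.
Proof.
have hm b : D b false - D b true
    = prob_joint rho 1%:M (proj (psi false) - proj (psi true)).
  rewrite -[~~ true]/false -[~~ false]/true -[proj (psi true) - _]opprB.
  by rewrite prob_jointN opprK povm_prob_sum.
by rewrite !hm.
Qed.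

Lemma test_stat_bound b a lam : 0 < 1 - c2 -> 0 < lam ->
  `|D b a - (1 - c2) * p b a|
    <= 2 * (1 - c2) * e b a + lam * p b a + c2 * (1 - c2) * e b a / lam.
Proof.
move=> s2_gt0 lam_gt0.
have hc : inner (psi a) (psi (~~ a)) * Num.conj (inner (psi a) (psi (~~ a))) = c2%:C.
  case: a; last by rewrite -[~~ false]/true -normCK hc2.
  by rewrite -[~~ true]/false innerC conjCK mulrC -normCK hc2.
case: hrho => hrho_psd _.
have g_ge0 k (Y : 'M[R[i]]_(k, dB)) := tr_tens_ge0 Y hrho_psd (povm_psd b a).
exact: (Reg_overlap_bound (tr_tensD rho (P b a)) (tr_tensZ rho (P b a)) g_ge0
          (hpsi a) (hpsi (~~ a)) hc s2_gt0 lam_gt0).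
Qed.

Lemma Ef_miss :
  Ef rho P psi = 1 - (e false false + e false true + e true false + e true true) / 2.
Proof.
have hit_prob b a : prob_joint rho (P b a) (proj (psi a)) = p b a - e b a.
  by rewrite prob_jointB opprB addrC subrK.
rewrite /Ef !big_bool !hit_prob.
have := outcome_prob_sum false; have := outcome_prob_sum true.
(* Abstracting the probabilities keeps [lra] from unfolding [prob_joint]. *)
move: (p false false) (p false true) (p true false) (p true true).
move: (e false false) (e false true) (e true false) (e true true).
by move=> * /=; lra.
Qed.

Lemma Py_le_bias c :
  Py rho P c <= Num.min (2^-1 + `|p false false - p true false| / 2) 1.
Proof.
have := outcome_prob_sum false; have := outcome_prob_sum true.
have := outcome_prob_ge0 false false; have := outcome_prob_ge0 false true.
have := outcome_prob_ge0 true false; have := outcome_prob_ge0 true true.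
rewrite /Py; under eq_bigr => b _ do rewrite big_mkcond big_bool.
rewrite big_bool.
move: (p false false) (p false true) (p true false) (p true true) => p00 p01 p10 p11.
have := ler_norm (p00 - p10); have := ler_norm (p10 - p00); rewrite distrC.
by rewrite le_min; case: c => * /=; apply/andP; split; lra.
Qed.

Lemma Py_le_Fbound (theta : R) c : cos theta ^+ 2 = c2 -> 0 < sin theta ^+ 2 ->
  Py rho P c <= Fbound theta (Ef rho P psi).
Proof.
move=> hcos; rewrite sin2cos2 hcos => s2_gt0.
have c2_ge0 : 0 <= c2 by rewrite -hcos sqr_ge0.
set delta := (e false false + e false true + e true false + e true true) / 2.
have hdelta : e false false + e false true + e true false + e true true = 2 * delta.
  by rewrite /delta mulrC divfK ?pnatr_eq0.
have hbias := bias_bound c2_ge0 s2_gt0 outcome_prob_sum miss_prob_ge0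
  test_stat_marginal (fun b a lam => @test_stat_bound b a lam s2_gt0) hdelta.
apply: le_trans (Py_le_bias c) _.
rewrite /Fbound Ef_miss -/delta sin2cos2 hcos.
have -> : 1 - (1 - delta) = delta by ring.
apply: le_min2 => //; rewrite -addrA lerD2l; apply: half_bias_le hbias.
  by rewrite s2_gt0 lerBlDr lerDl.
by rewrite divr_ge0 // !addr_ge0 // miss_prob_ge0.
Qed.

End Protocol.

Unset Implicit Arguments.

Theorem lemma1 (R : realType) (theta : R) (htheta : 0 < theta <= pi / 2)
  (dA dB : nat) (psi : bool -> 'cV[R[i]]_dB)
  (hpsi0 : unit_vec (psi false)) (hpsi1 : unit_vec (psi true))
  (hover : `|inner (psi false) (psi true)| ^+ 2 = (cos theta ^+ 2)%:C)
  (rho : 'M[R[i]]_(dA * dB)) (hrho : density rho)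
  (P : bool -> bool -> 'M[R[i]]_dA) (hP : forall b, povm2 (P b)) :
  (forall c : bool, Py rho P c <= Fbound theta (Ef rho P psi)) /\
  (forall u v t : R, 0 <= u <= 1 -> 0 <= v <= 1 -> 0 <= t <= 1 ->
     t * Fbound theta u + (1 - t) * Fbound theta v
       <= Fbound theta (t * u + (1 - t) * v)) /\
  (forall u v : R, 0 <= u <= 1 -> 0 <= v <= 1 -> u <= v ->
     Fbound theta v <= Fbound theta u).
Proof.
have s2_gt0 := sin_sqr_gt0 htheta.
have hpsi : forall a, unit_vec (psi a) by case.
split; first by move=> c; exact: (Py_le_Fbound hrho hP hpsi hover c erefl s2_gt0).
split=> [u v t /andP[_ u_le1] /andP[_ v_le1] | u v _ _].
  exact: Fbound_concave.
exact: Fbound_nonincr.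
Qed.
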